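(* Let $\sigma>0$, $\alpha>0$, $\eta>0$ and define the penalty $p(t)=(\alpha+1)\log(\sigma\eta+t)$ for $t\ge 0$. For $\hat\beta\in\mathbb{R}$ consider the penalized least squares problem $$\tilde\beta(\hat\beta)=\arg\min_{\beta\in\mathbb{R}}\left\{\tfrac12(\hat\beta-\beta)^2+\sigma^{2}p(|\beta|)\right\}.$$ If $\eta<2\sqrt{\alpha+1}$, then the resulting estimator is a thresholding rule: there exists $c>0$ such that for every $\hat\beta$ with $|\hat\beta|<c$ the minimizer is $\tilde\beta(\hat\beta)=0$.
   Context: This penalty is the part of $-\log\pi(\beta\mid\sigma)$ depending on $\beta$ under the generalized double Pareto prior $\beta\mid\sigma\sim\mathrm{GDP}(\xi=\sigma\eta/\alpha,\alpha)$, whose density is $\frac{1}{2\xi}(1+|\beta|/(\alpha\xi))^{-(\alpha+1)}$; the problem corresponds to a single coordinate of penalized least squares with an orthonormal design, where $\hat\beta=\mathbf{x}_j'\mathbf{y}$. *)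

From Stdlib Require Import Reals.
Open Scope R_scope.

Definition gdp_pen (sigma alpha eta t : R) : R :=
  (alpha + 1) * ln (sigma * eta + t).

Definition gdp_obj (sigma alpha eta bhat beta : R) : R :=
  / 2 * (bhat - beta) ^ 2 + sigma ^ 2 * gdp_pen sigma alpha eta (Rabs beta).

Definition is_unique_argmin (f : R -> R) (b : R) : Prop :=
  forall beta, beta <> b -> f b < f beta.

(* With [k = sigma * eta] and [t = |beta|], concavity of [ln] gives
   [ln (k + t) - ln k >= t / (k + t)], so the objective exceeds its value at
   [0] by at least [t * (t / 2 + sigma^2 (alpha + 1) / (k + t) - |bhat|)].
   Since [x / 2 + s^2 / x >= s] for [x > 0], the bracket is at least
   [sigma sqrt (alpha + 1) - sigma eta / 2 - |bhat|], which is positive as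
   soon as [|bhat|] is below the threshold [sigma (sqrt (alpha + 1) - eta / 2)];
   the condition [eta < 2 sqrt (alpha + 1)] makes this threshold positive. *)

From Stdlib Require Import Reals Lra Psatz.
Open Scope R_scope.

Lemma ln_add_sub_ge_div (k t : R) :
  0 < k -> 0 < t -> t / (k + t) <= ln (k + t) - ln k.
Proof.
  intros hk ht.
  assert (exp_diff : exp (ln k - ln (k + t)) = k / (k + t)).
  { unfold Rminus. rewrite exp_plus, exp_Ropp, !exp_ln by lra. reflexivity. }
  pose proof (exp_ineq1_le (ln k - ln (k + t))) as exp_ge.
  rewrite exp_diff in exp_ge.
  replace (t / (k + t)) with (1 - k / (k + t)) by (field; lra).
  lra.
Qed.

Lemma half_add_sqr_div_ge (x s : R) : 0 < x -> s <= x / 2 + s ^ 2 / x.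
Proof.
  intros hx.
  apply (Rmult_le_reg_r x); [exact hx |].
  replace ((x / 2 + s ^ 2 / x) * x) with (x ^ 2 / 2 + s ^ 2) by (field; lra).
  pose proof (pow2_ge_0 (x - s)). pose proof (pow2_ge_0 s). nra.
Qed.

Lemma gdp_obj_sub_0 (sigma alpha eta bhat beta : R) :
  gdp_obj sigma alpha eta bhat beta - gdp_obj sigma alpha eta bhat 0 =
  Rabs beta ^ 2 / 2 - bhat * beta
  + sigma ^ 2 * (alpha + 1)
    * (ln (sigma * eta + Rabs beta) - ln (sigma * eta)).
Proof.
  unfold gdp_obj, gdp_pen.
  rewrite Rabs_R0, Rplus_0_r, pow2_abs.
  field.
Qed.

Lemma gdp_obj_sub_0_ge (sigma alpha eta bhat beta : R) :
  0 < sigma -> 0 < eta -> 0 <= alpha + 1 -> beta <> 0 ->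
  Rabs beta * (sigma * sqrt (alpha + 1) - sigma * eta / 2 - Rabs bhat)
  <= gdp_obj sigma alpha eta bhat beta - gdp_obj sigma alpha eta bhat 0.
Proof.
  intros hs he ha hbeta.
  rewrite gdp_obj_sub_0.
  set (k := sigma * eta). set (t := Rabs beta). set (q := sqrt (alpha + 1)).
  assert (hk : 0 < k) by (unfold k; nra).
  assert (ht : 0 < t) by (apply Rabs_pos_lt; exact hbeta).
  assert (hq : q ^ 2 = alpha + 1) by (unfold q; rewrite pow2_sqrt by lra; reflexivity).
  assert (cross : bhat * beta <= Rabs bhat * t).
  { unfold t. rewrite <- Rabs_mult. apply Rle_abs. }
  assert (log_gain : sigma ^ 2 * (alpha + 1) * (t / (k + t))
                  <= sigma ^ 2 * (alpha + 1) * (ln (k + t) - ln k)).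
  { apply Rmult_le_compat_l; [nra | exact (ln_add_sub_ge_div k t hk ht)]. }
  assert (am_gm : sigma * q <= (k + t) / 2 + (sigma * q) ^ 2 / (k + t))
    by (apply half_add_sqr_div_ge; lra).
  assert (gain_eq : sigma ^ 2 * (alpha + 1) * (t / (k + t))
                 = t * ((sigma * q) ^ 2 / (k + t)))
    by (rewrite <- hq; field; lra).
  assert (scaled : t * (sigma * q) <= t * ((k + t) / 2 + (sigma * q) ^ 2 / (k + t)))
    by (apply Rmult_le_compat_l; lra).
  nra.
Qed.

Theorem proposition3 (sigma alpha eta : R) :
  0 < sigma -> 0 < alpha -> 0 < eta -> eta < 2 * sqrt (alpha + 1) ->
  exists c : R, 0 < c /\
    forall bhat : R, Rabs bhat < c ->
      is_unique_argmin (gdp_obj sigma alpha eta bhat) 0.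
Proof.
  intros hs ha he heta.
  exists (sigma * sqrt (alpha + 1) - sigma * eta / 2). split.
  - nra.
  - intros bhat hb beta hbeta.
    assert (hpos : 0 < Rabs beta) by (apply Rabs_pos_lt; exact hbeta).
    pose proof (gdp_obj_sub_0_ge sigma alpha eta bhat beta hs he
                  ltac:(lra) hbeta) as gap.
    nra.
Qed.
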